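(* Let $A$ and $B$ be nonzero integers, let $g=\gcd(A,B)$, write $A=ga$, $B=gb$, and let $L$ be a positive integer such that every prime divisor of $L$ divides $g$ (i.e. $\ell=\prod_{p\nmid g}p^{\nu_p(L)}=1$). Let $\gamma(L)=\max_{p\mid g}\left\lceil \nu_p(L)/\nu_p(g)\right\rceil$ (with $\gamma(L)=0$ if $g=1$). Then $L\in G_{(A,B)}$ if and only if there exists a positive integer $K\ge\gamma(L)$. In this case $L\in G_{(A,B)}$ and every positive integer $K\ge\gamma(L)$ satisfies $L\mid(A^K+B^K)$.
   Context: For nonzero integers $x,y$, $G_{(x,y)}$ is the set of positive integers $n$ such that $n\mid(x^k+y^k)$ for some positive integer $k$. $\nu_p$ is the $p$-adic valuation; products and maxima over $p$ range over primes. *)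

From mathcomp Require Import all_boot all_order all_algebra.
Set Implicit Arguments. Unset Strict Implicit. Unset Printing Implicit Defensive.
Import Order.TTheory GRing.Theory Num.Theory.

Definition in_G (x y : int) (n : nat) : Prop :=
  exists k : nat, (0 < k)%N /\ (n%:Z %| (x ^+ k + y ^+ k)%R)%Z.

Definition ceil_div (m n : nat) : nat := (m + n.-1) %/ n.

Definition gammaL (g L : nat) : nat :=
  \max_(p <- primes g) ceil_div (logn p L) (logn p g).

From mathcomp Require Import all_boot all_order all_algebra zify.
Import Order.TTheory GRing.Theory Num.Theory.

(* Every prime of L divides g, so L | g^K as soon as nu_p(L) <= K nu_p(g) for
   each p | g, which is exactly gamma(L) <= K; and g^K divides A^K and B^K. *)

Lemma ceil_div_leP (m n K : nat) : (0 < n)%N ->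
  (ceil_div m n <= K)%N = (m <= n * K)%N.
Proof.
move=> n_gt0; rewrite /ceil_div -ltnS ltn_divLR // mulSn.
apply/idP/idP; lia.
Qed.

Lemma ceil_div_le_gammaL (L : nat) {g p : nat} : p \in primes g ->
  (ceil_div (logn p L) (logn p g) <= gammaL g L)%N.
Proof.
by move=> pg; apply: (@leq_bigmax_seq _ _ xpredT (fun q => ceil_div (logn q L) (logn q g))).
Qed.

Lemma dvdn_exp_gammaL (g L K : nat) : (0 < g)%N -> (0 < L)%N ->
  (forall p, prime p -> (p %| L)%N -> (p %| g)%N) ->
  (gammaL g L <= K)%N -> (L %| g ^ K)%N.
Proof.
move=> g_gt0 L_gt0 primesLg gammaK.
apply/dvdn_partP => // p; rewrite mem_primes => /and3P[p_pr _ pL].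
have pg : p \in primes g by rewrite mem_primes p_pr g_gt0 primesLg.
have logg_gt0 : (0 < logn p g)%N by rewrite logn_gt0.
have := leq_trans (ceil_div_le_gammaL L pg) gammaK.
by rewrite ceil_div_leP // p_part pfactor_dvdn ?expn_gt0 ?g_gt0 // lognX mulnC.
Qed.

Lemma dvdz_exp_gcd_addX (A B d : int) (K : nat) :
  (d %| (gcdz A B ^+ K)%R)%Z -> (d %| (A ^+ K + B ^+ K)%R)%Z.
Proof.
move=> dg; apply: rpredD.
  exact: dvdz_trans dg (dvdz_exp2r K (dvdz_gcdl A B)).
exact: dvdz_trans dg (dvdz_exp2r K (dvdz_gcdr A B)).
Qed.

Theorem corollary3p11 (A B : int) (L : nat)
  (hA : A != 0%R) (hB : B != 0%R) (hL : (0 < L)%N)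
  (hprimes : forall p : nat, prime p -> (p %| L)%N -> (p %| `|gcdz A B|%N)%N) :
  (in_G A B L <-> exists K : nat, (0 < K)%N /\ (gammaL `|gcdz A B|%N L <= K)%N) /\
  (forall K : nat, (0 < K)%N -> (gammaL `|gcdz A B|%N L <= K)%N ->
     (L%:Z %| (A ^+ K + B ^+ K)%R)%Z).
Proof.
have g_gt0 : (0 < `|gcdz A B|%N)%N by rewrite absz_gt0 gcdz_eq0 negb_and hA.
have dvdL_sum K : (gammaL `|gcdz A B|%N L <= K)%N ->
    (L%:Z %| (A ^+ K + B ^+ K)%R)%Z.
  move=> gammaK; apply: dvdz_exp_gcd_addX.
  by rewrite dvdzE abszX; apply: dvdn_exp_gammaL.
split=> [|K _]; last exact: dvdL_sum.
split=> [_ | [K [K_gt0 gammaK]]].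
  by exists (maxn 1 (gammaL `|gcdz A B|%N L)); rewrite leq_maxl leq_maxr.
by exists K; split; last exact: dvdL_sum.
Qed.
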